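(* Let $n,m,\delta$ be integers with $\delta \geq n$ and $\delta \geq (m+2)/2$. Then every hypergraph with $n$ vertices, $m$ edges and minimum degree at least $\delta$ is super-pancyclic.
   Context: A hypergraph $\mathcal{H}$ consists of a vertex set $V(\mathcal{H})$ and an edge set $E(\mathcal{H})$ of subsets of $V(\mathcal{H})$; the degree of a vertex is the number of edges containing it. A Berge cycle of length $\ell$ consists of $\ell$ distinct vertices $v_1,\dots,v_\ell$ (its base vertices) and $\ell$ distinct edges $e_1,\dots,e_\ell$ with $v_i,v_{i+1}\in e_i$ (indices mod $\ell$). $\mathcal{H}$ is super-pancyclic if for every $A \subseteq V(\mathcal{H})$ with $|A|\geq 3$, $\mathcal{H}$ has a Berge cycle whose set of base vertices is exactly $A$. *)

From mathcomp Require Import all_boot.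
Set Implicit Arguments. Unset Strict Implicit. Unset Printing Implicit Defensive.

Definition hdegree (V : finType) (E : {set {set V}}) (v : V) : nat :=
  #|[set e in E | v \in e]|.

Definition berge_cycle (V : finType) (E : {set {set V}}) (l : nat)
    (vs : 'I_l -> V) (es : 'I_l -> {set V}) : Prop :=
  injective vs /\ injective es /\
  (forall i, es i \in E) /\
  (forall i, vs i \in es i /\ vs (ordS i) \in es i).

Definition super_pancyclic (V : finType) (E : {set {set V}}) : Prop :=
  forall A : {set V}, 3 <= #|A| ->
    exists l (vs : 'I_l -> V) (es : 'I_l -> {set V}),
      berge_cycle E vs es /\ [set vs i | i : 'I_l] = A.

From mathcomp Require Import all_boot zify.
Set Implicit Arguments. Unset Strict Implicit. Unset Printing Implicit Defensive.

(* Two vertices u, w lie in at least 2 delta - m >= 2 common edges, since their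
   degrees add up to at least 2 delta.  A Berge cycle on A is grown one base vertex
   at a time; while it has fewer than delta base vertices it has fewer than delta
   edges.  To add a vertex x:
   - if no edge of the cycle contains x, replace an edge between consecutive base
     vertices v, w by v f x g w, with f, g distinct edges containing x, v and x, w;
   - otherwise let w_e be the base vertex following a cycle edge e that contains x.
     An edge f off the cycle containing x and some w_e inserts x between e and w_e;
     an edge h off the cycle containing w_e and w_e' (e <> e') gives the cycle
     x e ... w_e' h w_e ... e' x, which runs through one arc backwards.
   If neither exists, the off-cycle edges at x and at the w_e are pairwise distinct;
   with a cycle edges at x and c cycle edges in total this gives
   (delta - a) + a (delta - c) <= m - c, impossible when 1 <= a, c < delta and
   m + 2 <= 2 delta. *)

Lemma next_cat_cons (T : eqType) (p q : seq T) y :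
  uniq (p ++ y :: q) -> next (p ++ y :: q) y = head (head y p) q.
Proof.
move=> Upq; rewrite -(next_rot (size p) Upq) rot_size_cat.
case: q {Upq} => [|z q] /=; last by rewrite eqxx.
by case: p => [|z p] /=; rewrite eqxx.
Qed.

Lemma rcons_head (T : Type) (p : seq T) x :
  rcons p x = head x p :: behead (rcons p x).
Proof. by case: p. Qed.

Lemma cycle_nth (T : Type) (r : rel T) x0 p k :
  cycle r p -> k < size p -> r (nth x0 p k) (nth x0 p (k.+1 %% size p)).
Proof.
case: p => // a p /(pathP x0) /(_ k) + k_le; rewrite size_rcons => /(_ k_le).
rewrite -rcons_cons !nth_rcons /= k_le.
have [k_lt | k_ge] := ltnP k (size p); first by rewrite modn_small.
have -> : k = size p by apply/eqP; rewrite eqn_leq -ltnS k_le k_ge.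
by rewrite eqxx modnn.
Qed.

Lemma path_rev_cons (T : Type) (r : rel T) x y p :
  symmetric r -> path r x (rev (y :: p)) = r x (last y p) && path r y p.
Proof.
move=> r_sym; rewrite lastI rev_rcons /= rev_path.
by congr (_ && _); apply: eq_path => a b; apply: r_sym.
Qed.

Lemma perm_splice_rev (T : eqType) (y z u : T) a b :
  perm_eq (y :: rev b ++ u :: a ++ [:: z]) (u :: y :: a ++ z :: b).
Proof.
apply/permP => P; rewrite /= !(count_cat, count_rev) /= count_cat /=.
move: (count P a) (count P b) (nat_of_bool (P y)) (nat_of_bool (P z)) (nat_of_bool (P u)).
lia.
Qed.

Lemma card_setId_sum (T : finType) (A : {set T}) (P : pred T) :
  #|[set x in A | P x]| = \sum_(x in A) P x.
Proof. by rewrite -sum1dep_card big_mkcondr; apply: eq_bigr => x _; case: (P x). Qed.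

Section Degrees.
Variable V : finType.
Implicit Types (E C W : {set {set V}}) (U : {set V}) (v : V).

Lemma hdegree_le_card E v : hdegree E v <= #|E|.
Proof. by apply: subset_leq_card; apply/subsetP => f; rewrite inE => /andP[]. Qed.

Lemma hdegree_setD E C v : hdegree E v <= hdegree (E :\: C) v + hdegree C v.
Proof.
rewrite /hdegree; apply: leq_trans (leq_card_setU _ _).
apply: subset_leq_card; apply/subsetP => f.
by rewrite !inE; case: (f \in C); case: (v \in f); case: (f \in E).
Qed.

Lemma sum_hdegree_le_card W U :
  {in W, forall f, #|U :&: f| <= 1} -> \sum_(u in U) hdegree W u <= #|W|.
Proof.
move=> W1; rewrite -sum1_card.
have -> : \sum_(u in U) hdegree W u = \sum_(f in W) #|U :&: f|.
  rewrite /hdegree; under eq_bigr do rewrite card_setId_sum.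
  rewrite exchange_big; apply: eq_bigr => f _.
  by rewrite -card_setId_sum; congr #|_|; apply/setP => u; rewrite !inE.
exact: leq_sum.
Qed.

End Degrees.

Section IncidenceCycles.
Variables (V : finType) (E : {set {set V}}).

(* A Berge cycle v1 e1 v2 e2 ... is stored as the cyclic sequence of its base
   vertices and edges, i.e. as a cycle of the bipartite incidence graph; the
   degenerate sequences [::] and [:: inl v; inr e] are allowed. *)
Definition node := (V + {set V})%type.

Definition incident : rel node := fun a b =>
  match a, b with
  | inl v, inr e | inr e, inl v => v \in e
  | _, _ => false
  end.

Definition base (s : seq node) : {set V} := [set v | inl v \in s].
Definition hedges (s : seq node) : {set {set V}} := [set e | inr e \in s].

Definition berge_seq (s : seq node) :=
  [&& cycle incident s, uniq s & hedges s \subset E].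

Lemma incident_sym : symmetric incident.
Proof. by case=> [a|a] [b|b]. Qed.

Lemma base_perm s t : perm_eq s t -> base s = base t.
Proof. by move=> /perm_mem st; apply/setP => v; rewrite !inE st. Qed.

Lemma hedges_perm s t : perm_eq s t -> hedges s = hedges t.
Proof. by move=> /perm_mem st; apply/setP => e; rewrite !inE st. Qed.

Lemma base_rot i s : base (rot i s) = base s.
Proof. by apply: base_perm; rewrite perm_rot. Qed.

Lemma hedges_rot i s : hedges (rot i s) = hedges s.
Proof. by apply: hedges_perm; rewrite perm_rot. Qed.

Lemma berge_seq_rot i s : berge_seq (rot i s) = berge_seq s.
Proof. by rewrite /berge_seq rot_cycle rot_uniq hedges_rot. Qed.

Lemma berge_seq_vertex s : berge_seq s -> s != [::] -> exists v, v \in base s.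
Proof.
case: s => // a s /and3P[cyc _ _] _; case: a cyc => [v|e] cyc.
  by exists v; rewrite inE mem_head.
have := next_cycle cyc (mem_head _ _).
case: (next _ _) (mem_next (inr e :: s) (inr e)) => // v vs _.
by exists v; rewrite inE vs mem_head.
Qed.

(* [v0] is a junk default: in a Berge sequence an edge is followed by a vertex. *)
Definition next_vertex (s : seq node) (v0 : V) (e : {set V}) : V :=
  if next s (inr e) is inl w then w else v0.

Section NextVertex.
Variables (s : seq node) (v0 : V).
Hypothesis bs : berge_seq s.

Lemma next_vertexE e : e \in hedges s -> next s (inr e) = inl (next_vertex s v0 e).
Proof.
case/and3P: bs => cyc _ _; rewrite inE => /(next_cycle cyc).
by rewrite /next_vertex; case: (next _ _).
Qed.

Lemma next_vertex_in_base e : e \in hedges s -> next_vertex s v0 e \in base s.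
Proof. by move=> es; rewrite inE -(next_vertexE es) mem_next; rewrite inE in es. Qed.

Lemma next_vertex_inj : {in hedges s &, injective (next_vertex s v0)}.
Proof.
case/and3P: bs => _ us _ e1 e2 e1s e2s eq_nv.
have /(congr1 (prev s)) : next s (inr e1) = next s (inr e2).
  by rewrite !next_vertexE // eq_nv.
by rewrite !(prev_next us) => -[].
Qed.

Lemma rot_to_edge e : e \in hedges s ->
  exists i t, rot i s = [:: inr e, inl (next_vertex s v0 e) & t].
Proof.
move=> es; have [i t rot_s] : rot_to_spec s (inr e) by apply: rot_to; rewrite inE in es.
have us : uniq s by case/and3P: bs.
have := next_vertexE es; rewrite -(next_rot i us) rot_s.
case: t rot_s => [|a t] rot_s /=; rewrite eqxx => a_nv; first discriminate.
by exists i, t; rewrite rot_s a_nv.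
Qed.

End NextVertex.

Lemma extend_by_perm s t x f :
  cycle incident t -> perm_eq t [:: inl x, inr f & s] ->
  uniq s -> hedges s \subset E -> x \notin base s -> f \in E -> f \notin hedges s ->
  exists2 t', berge_seq t' & base t' = x |: base s.
Proof.
move=> cyc_t t_xfs us sE xs fE fs; exists t; last first.
  by rewrite (base_perm t_xfs); apply/setP => v; rewrite !inE.
rewrite inE in xs; rewrite inE in fs.
rewrite /berge_seq cyc_t (perm_uniq t_xfs) /= !inE xs fs us.
apply/subsetP => e; rewrite inE (perm_mem t_xfs) !inE.
by case/or3P=> [/eqP //|/eqP [->] //|es]; apply: (subsetP sE); rewrite inE.
Qed.

Lemma insert_extend s v0 e x f :
  berge_seq s -> e \in hedges s -> x \notin base s -> f \in E -> f \notin hedges s ->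
  x \in e -> x \in f -> next_vertex s v0 e \in f ->
  exists2 t, berge_seq t & base t = x |: base s.
Proof.
move=> bs es xs fE fs xe xf wf; have [i [t rot_s]] := rot_to_edge v0 bs es.
rewrite -(base_rot i s) rot_s; rewrite -(base_rot i s) rot_s in xs.
rewrite -(hedges_rot i s) rot_s in fs; rewrite -(berge_seq_rot i s) rot_s in bs.
move: wf bs; set w := next_vertex s v0 e => wf /and3P[cyc_s us sE].
apply: (extend_by_perm (t := [:: inr e, inl x, inr f, inl w & t]) (f := f)) => //.
  by move: cyc_s; rewrite /= xe xf wf => /andP[_ ->].
by rewrite (perm_catCA [:: inr e] [:: inl x; inr f]).
Qed.

Lemma reversal_extend s v0 e1 e2 x h :
  berge_seq s -> e1 \in hedges s -> e2 \in hedges s -> e1 != e2 ->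
  x \notin base s -> h \in E -> h \notin hedges s -> x \in e1 -> x \in e2 ->
  next_vertex s v0 e1 \in h -> next_vertex s v0 e2 \in h ->
  exists2 t, berge_seq t & base t = x |: base s.
Proof.
move=> bs e1s e2s e12 xs hE hs xe1 xe2 w1h w2h.
have [i [t rot_s]] := rot_to_edge v0 bs e1s.
have next_e2 := next_vertexE v0 bs e2s.
rewrite -(next_rot i) ?rot_s in next_e2; last by case/and3P: bs.
rewrite -(base_rot i s) rot_s; rewrite -(base_rot i s) rot_s in xs.
rewrite -(hedges_rot i s) rot_s in hs e2s; rewrite -(berge_seq_rot i s) rot_s in bs.
move: w1h w2h next_e2 bs; set w1 := next_vertex s v0 e1; set w2 := next_vertex s v0 e2.
move=> w1h w2h next_e2 /and3P[cyc_s us sE].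
have e2t : inr e2 \in t.
  by move: e2s; rewrite !inE -[inr e2 == _]/(e2 == e1) eq_sym (negbTE e12).
move: next_e2 cyc_s us sE xs hs; case/splitPr: e2t => p1 p2 next_e2 cyc_s us sE xs hs.
move: next_e2; rewrite -[_ :: _ :: p1 ++ _]/([:: inr e1, inl w1 & p1] ++ _) next_cat_cons //.
case: p2 cyc_s us sE xs hs => [|a p2] cyc_s us sE xs hs /= a_w2; first discriminate.
subst a.
apply: (extend_by_perm
  (t := inl x :: inr e1 :: rev (inl w2 :: p2) ++ inr h :: inl w1 :: p1 ++ [:: inr e2])
  (f := h)) => //.
- move: cyc_s; rewrite /= !(rcons_cat, rcons_cons) cat_path /=.
  case/and5P=> _ p1_path p1_e2 _; rewrite rcons_path => /andP[p2_path p2_e1].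
  rewrite cat_path (path_rev_cons _ _ _ incident_sym) (incident_sym (inr e1)) p2_e1.
  by rewrite rev_cons last_rcons /= cat_path /= p2_path p1_path p1_e2 w1h w2h xe1 xe2.
- by rewrite perm_cons (perm_splice_rev _ _ _ (inl w1 :: p1)).
Qed.

Lemma detour_extend v e w t x f g :
  let s := [:: inl v, inr e & t] in
  berge_seq s -> head (inl v) t = inl w -> x \notin base s ->
  f \in E -> f \notin hedges s -> g \in E -> g \notin hedges s -> f != g ->
  x \in f -> v \in f -> x \in g -> w \in g ->
  exists2 t', berge_seq t' & base t' = x |: base s.
Proof.
move=> s /and3P[cyc_s us sE] head_t xs fE fs gE gs fg xf vf xg wg.
have fresh h : h \notin hedges s -> inr h \notin t by rewrite !inE => /norP[_ /norP[]].
have -> : base s = base [:: inl v, inr g & t] by apply/setP => u; rewrite !inE.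
apply: (extend_by_perm (t := [:: inl v, inr f, inl x, inr g & t]) (f := f)).
- by move: cyc_s; rewrite /= vf xf xg (rcons_head t) head_t /= wg => /and3P[_ _ ->].
- rewrite (perm_catCA [:: inl v; inr f] [:: inl x]) perm_cons.
  by rewrite (perm_catCA [:: inl v] [:: inr f]).
- move: us; rewrite /= !inE (negbTE (fresh g gs)).
  by case/and3P => /norP[_ vt] _ ->; rewrite (negbTE vt).
- apply/subsetP => h; rewrite !inE => /or3P[/eqP //|/eqP [->] //|ht].
  by apply: (subsetP sE); rewrite !inE ht !orbT.
- by move: xs; rewrite !inE.
- done.
- by rewrite !inE -[inr f == inr g]/(f == g) (negbTE fg) (negbTE (fresh f fs)).
Qed.

Definition is_edge_node (a : node) := if a is inr _ then true else false.

Lemma incident_is_edge_node a b : incident a b -> is_edge_node b = ~~ is_edge_node a.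
Proof. by case: a b => [a|a] [b|b]. Qed.

Section Alternation.
Variables (v : V) (t : seq node).
Let p := inl v :: t.
Hypotheses (cyc_p : cycle incident p) (uniq_p : uniq p) (pE : hedges p \subset E).

Lemma is_edge_node_nth k : k < size p -> is_edge_node (nth (inl v) p k) = odd k.
Proof.
elim: k => [//|k IH] k_lt; have k_lt' := ltnW k_lt.
have := cycle_nth (inl v) cyc_p k_lt'; rewrite modn_small // => /incident_is_edge_node ->.
by rewrite IH.
Qed.

Let l := (size p)./2.

Lemma size_alternating : size p = l.*2.
Proof.
have := cycle_nth (inl v) cyc_p (ltnSn (size t)); rewrite modnn.
move=> /incident_is_edge_node /= /esym /negbFE; rewrite is_edge_node_nth //= => odd_t.
by rewrite -[LHS]odd_double_half /= odd_t.
Qed.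

(* The defaults [v] and [set0] are never used: even positions hold vertices,
   odd positions edges. *)
Definition alt_vertex (i : 'I_l) : V := if nth (inl v) p i.*2 is inl w then w else v.
Definition alt_edge (i : 'I_l) : {set V} :=
  if nth (inl v) p i.*2.+1 is inr e then e else set0.

Lemma alt_edge_pos (i : 'I_l) : i.*2.+1 < size p.
Proof. by rewrite size_alternating ltn_Sdouble. Qed.

Lemma alt_vertexE (i : 'I_l) : nth (inl v) p i.*2 = inl (alt_vertex i).
Proof.
have := is_edge_node_nth (ltnW (alt_edge_pos i)); rewrite odd_double /alt_vertex.
by case: (nth _ _ _).
Qed.

Lemma alt_edgeE (i : 'I_l) : nth (inl v) p i.*2.+1 = inr (alt_edge i).
Proof.
have := is_edge_node_nth (alt_edge_pos i); rewrite oddS odd_double /alt_edge.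
by case: (nth _ _ _).
Qed.

Lemma berge_cycle_alternating : berge_cycle E alt_vertex alt_edge.
Proof.
have lt_p := alt_edge_pos; split; [|split; [|split]].
- move=> i j vs_ij; apply/val_inj/double_inj/eqP.
  by rewrite -(nth_uniq (inl v) (ltnW (lt_p i)) (ltnW (lt_p j)) uniq_p) !alt_vertexE vs_ij.
- move=> i j es_ij; apply/val_inj/double_inj/eqP; rewrite -eqSS.
  by rewrite -(nth_uniq (inl v) (lt_p i) (lt_p j) uniq_p) !alt_edgeE es_ij.
- by move=> i; apply: (subsetP pE); rewrite inE -alt_edgeE mem_nth.
move=> i; split.
  have := cycle_nth (inl v) cyc_p (ltnW (lt_p i)).
  by rewrite modn_small // alt_vertexE alt_edgeE.
have := cycle_nth (inl v) cyc_p (lt_p i).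
have -> : i.*2.+2 %% size p = (ordS i).*2.
  by rewrite size_alternating -!muln2 muln_modl.
by rewrite alt_edgeE alt_vertexE.
Qed.

Lemma alt_vertex_image : [set alt_vertex i | i : 'I_l] = base p.
Proof.
apply/setP => w; rewrite inE; apply/imsetP/idP => [[i _ ->] | wp].
  by rewrite -alt_vertexE mem_nth // (ltnW (alt_edge_pos i)).
have /(nth_index (inl v)) nth_w := wp; set k := index (inl w) p in nth_w.
have k_lt : k < size p by rewrite index_mem.
have k_even : k = k./2.*2.
  by move: (is_edge_node_nth k_lt); rewrite nth_w -{2}[k]odd_double_half => <-.
have half_lt : k./2 < l by rewrite -ltn_double -k_even -size_alternating.
by exists (Ordinal half_lt); rewrite // /alt_vertex /= -k_even nth_w.
Qed.

End Alternation.

Lemma berge_cycle_of_seq s v :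
  berge_seq s -> inl v \in s ->
  exists l (vs : 'I_l -> V) (es : 'I_l -> {set V}),
    berge_cycle E vs es /\ [set vs i | i : 'I_l] = base s.
Proof.
move=> bs /rot_to[r t rot_s]; rewrite -(base_rot r) rot_s.
move: bs; rewrite -(berge_seq_rot r) rot_s => /and3P[cyc_p uniq_p pE].
exists _, (@alt_vertex v t), (@alt_edge v t).
by rewrite alt_vertex_image //; split; first exact: berge_cycle_alternating.
Qed.
End IncidenceCycles.

Section DenseHypergraph.
Variables (V : finType) (E : {set {set V}}) (delta : nat).
Hypothesis few_edges : #|E| + 2 <= 2 * delta.
Hypothesis min_degree : forall v, delta <= hdegree E v.

Lemma common_edge_avoiding u w g : exists2 f, f \in E :\ g & (u \in f) && (w \in f).
Proof.
set Euw := [set f in E | (u \in f) && (w \in f)].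
have Euw_gt1 : 1 < #|Euw|.
  have -> : Euw = [set f in E | u \in f] :&: [set f in E | w \in f].
    by apply/setP => f; rewrite !inE andbACA andbb.
  have Uuw_le : #|[set f in E | u \in f] :|: [set f in E | w \in f]| <= #|E|.
    by apply: subset_leq_card; apply/subsetP => f; rewrite !inE -andb_orr => /andP[].
  have := cardsUI [set f in E | u \in f] [set f in E | w \in f].
  have := min_degree u; have := min_degree w; rewrite /hdegree; lia.
have /card_gt0P[f] : 0 < #|Euw :\ g| by rewrite (cardsD1 g) in Euw_gt1; lia.
by rewrite !inE => /and4P[fg fE uf wf]; exists f; rewrite ?inE ?fg ?fE ?uf ?wf.
Qed.

Lemma fresh_edge_meets_twice (C : {set {set V}}) (x : V) (U : {set V}) :
  C \subset E -> #|C| < delta -> x \notin U -> 0 < #|U| -> hdegree C x <= #|U| ->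
  exists2 f, f \in E :\: C & 1 < #|(x |: U) :&: f|.
Proof.
move=> CE C_lt xU U_gt0 degCx; apply/exists_inP; apply: contraT => /exists_inPn meet_gt1.
have meet_le1 : {in E :\: C, forall f, #|(x |: U) :&: f| <= 1}.
  by move=> f /meet_gt1; rewrite ltnNge negbK.
have := sum_hdegree_le_card meet_le1.
rewrite big_setU1 //= cardsD (setIidPr CE).
have degx := leq_trans (min_degree x) (hdegree_setD E C x).
have degU : #|U| * (delta - #|C|) <= \sum_(u in U) hdegree (E :\: C) u.
  rewrite -sum_nat_const; apply: leq_sum => u _.
  have := leq_trans (min_degree u) (hdegree_setD E C u).
  have := hdegree_le_card C u; lia.
have := subset_leq_card CE; nia.
Qed.

Lemma extend_off_cycle s x :
  berge_seq E s -> s != [::] -> x \notin base s -> hdegree (hedges s) x = 0 ->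
  exists2 t, berge_seq E t & base t = x |: base s.
Proof.
move=> bs s_nil xs /cards0_eq x_out; have [v vs] := berge_seq_vertex bs s_nil.
have fresh (h : {set V}) : x \in h -> h \notin hedges s.
  by move=> xh; apply/negP => hs; have := in_set0 h; rewrite -x_out inE hs xh.
have [i t0 rot_s] : rot_to_spec s (inl v) by apply: rot_to; rewrite inE in vs.
have := bs; rewrite -(berge_seq_rot _ i) rot_s.
case: t0 rot_s => [|[u|e] t] rot_s //= bs'.
have es : e \in hedges s by rewrite -(hedges_rot i) rot_s !inE eqxx orbT.
have head_t : head (inl v) t = inl (next_vertex s x e).
  have us : uniq s by case/and3P: bs.
  have us' : uniq [:: inl v, inr e & t] by rewrite -rot_s rot_uniq.
  rewrite -(next_vertexE x bs es) -(next_rot i us) rot_s.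
  by rewrite -[[:: inl v, inr e & t]]/([:: inl v] ++ _) next_cat_cons.
have [g /setD1P[_ gE] /andP[xg wg]] := common_edge_avoiding x (next_vertex s x e) e.
have [f /setD1P[fg fE] /andP[xf vf]] := common_edge_avoiding x v g.
rewrite -(hedges_rot i) rot_s in fresh; rewrite -(base_rot i) rot_s in xs *.
exact: (detour_extend bs' head_t xs fE (fresh f xf) gE (fresh g xg) fg xf vf xg wg).
Qed.

Lemma berge_seq_extend s x :
  berge_seq E s -> x \notin base s -> #|base s| < delta ->
  exists2 t, berge_seq E t & base t = x |: base s.
Proof.
move=> bs xs s_lt; have [-> | s_nil] := eqVneq s [::].
  have /card_gt0P[f /setIdP[fE xf]] : 0 < hdegree E x.
    by apply: leq_trans (min_degree x); lia.
  apply: (extend_by_perm (t := [:: inl x; inr f]) (f := f)); rewrite //= ?xf ?inE //.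
  by apply/subsetP => e; rewrite inE.
have [x_out | X_gt0] := posnP (hdegree (hedges s) x).
  exact: (extend_off_cycle bs s_nil xs x_out).
set X := [set e in hedges s | x \in e] in X_gt0.
have sE : hedges s \subset E by case/and3P: bs.
have XE : X \subset hedges s by apply/subsetP => e; rewrite inE => /andP[].
have nv_inj : {in X &, injective (next_vertex s x)}.
  by move=> e1 e2 /(subsetP XE) e1s /(subsetP XE) e2s; apply: (next_vertex_inj bs).
have [f /setDP[fE fs]] : exists2 f, f \in E :\: hedges s &
    1 < #|(x |: [set next_vertex s x e | e in X]) :&: f|.
  apply: fresh_edge_meets_twice; rewrite ?card_in_imset //.
  - rewrite -(card_in_imset (next_vertex_inj (v0 := x) bs)).
    apply: leq_ltn_trans s_lt; apply/subset_leq_card/subsetP => _ /imsetP[e es ->].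
    exact: (next_vertex_in_base x bs).
  - apply/imsetP => -[e /(subsetP XE) es x_nv].
    by move: xs; rewrite x_nv (next_vertex_in_base x bs).
move=> /card_gt1P[u1 [u2 []]]; rewrite !inE.
case/andP=> /orP[/eqP -> | /imsetP[e1 e1X ->]] u1f.
all: case/andP=> /orP[/eqP -> | /imsetP[e2 e2X ->]] u2f u12.
- by rewrite eqxx in u12.
- by case/setIdP: e2X => e2s xe2; apply: (insert_extend bs e2s xs fE fs xe2 u1f u2f).
- by case/setIdP: e1X => e1s xe1; apply: (insert_extend bs e1s xs fE fs xe1 u2f u1f).
case/setIdP: e1X => e1s xe1; case/setIdP: e2X => e2s xe2.
apply: (reversal_extend bs e1s e2s _ xs fE fs xe1 xe2 u1f u2f).
by apply: contraNneq u12 => ->.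
Qed.

Lemma berge_seq_of_set (A : {set V}) :
  #|A| <= delta -> exists2 s, berge_seq E s & base s = A.
Proof.
have [k] := ubnP #|A|; elim: k A => // k IH A A_lt A_le.
have [-> | [x xA]] := set_0Vmem A.
  exists [::]; last by apply/setP => v; rewrite !inE.
  by apply/and3P; split => //; apply/subsetP => e; rewrite inE.
have A_x := cardsD1 x A; rewrite xA in A_x.
have [s bs s_A] : exists2 s, berge_seq E s & base s = A :\ x by apply: IH; lia.
have xs : x \notin base s by rewrite s_A setD11.
have s_lt : #|base s| < delta by rewrite s_A; lia.
have [t bt t_A] := berge_seq_extend bs xs s_lt.
by exists t; rewrite // t_A s_A setD1K.
Qed.

End DenseHypergraph.

Theorem theorem7 (n m delta : nat) (V : finType) (E : {set {set V}}) :
  n <= delta -> m + 2 <= 2 * delta ->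
  #|V| = n -> #|E| = m ->
  (forall v : V, delta <= hdegree E v) ->
  super_pancyclic E.
Proof.
move=> n_le m_le card_V card_E min_degree A A_ge3.
have few_edges : #|E| + 2 <= 2 * delta by rewrite card_E.
have A_le : #|A| <= delta by rewrite (leq_trans (max_card A)) ?card_V.
have [s bs s_A] := berge_seq_of_set few_edges min_degree A_le.
have [v vA] : exists v, v \in A by apply/card_gt0P; lia.
rewrite -s_A inE in vA; rewrite -s_A.
exact: berge_cycle_of_seq bs vA.
Qed.
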